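(* Let $p,q$ be coprime positive integers with $p\le q$ and $m$ a positive integer. Let $S=\mathbb C[X_0,\dots,X_4]/(X_0^{q-p}-X_1X_4+X_2X_3)$, graded by $\mathbb Z\times\mathbb Z/m\mathbb Z$ with $X_0$ of degree $(1,0)$, $X_1,X_2$ of degree $(-p,-1)$ and $X_3,X_4$ of degree $(q,1)$, and let $S^{G}=S_{(0,0)}$ be its degree-$(0,0)$ subring. Then (i) $S_{(-p,-1)}=S^{G}X_1+S^{G}X_2$; (ii) $S_{(q,1)}=S^{G}X_3+S^{G}X_4$.
   Context: The grading is the weight grading for the action of $G=G_0\times G_m$ on $\mathbb C^5$ given by $t\cdot(x_0,\dots,x_4)=(tx_0,t^{-p}x_1,t^{-p}x_2,t^qx_3,t^qx_4)$ for $t\in\mathbb C^*$ and $\zeta\cdot(x_0,\dots,x_4)=(x_0,\zeta^{-1}x_1,\zeta^{-1}x_2,\zeta x_3,\zeta x_4)$ for $\zeta\in\mu_m$; $S_{(0,0)}$ is the invariant ring $S^{G}$. *)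

From HB Require Import structures.
From mathcomp Require Import all_boot all_order all_algebra all_field.
From mathcomp Require Import mpoly.
Set Implicit Arguments. Unset Strict Implicit. Unset Printing Implicit Defensive.
Import Order.TTheory GRing.Theory Num.Theory.
Local Open Scope ring_scope.

(* The ambient polynomial ring C[X_0,...,X_4]; C is modelled by algC. *)
Definition R5 := {mpoly algC[5]}.

Definition X0 : R5 := 'X_(inord 0).
Definition X1 : R5 := 'X_(inord 1).
Definition X2 : R5 := 'X_(inord 2).
Definition X3 : R5 := 'X_(inord 3).
Definition X4 : R5 := 'X_(inord 4).

Definition frel (p q : nat) : R5 := X0 ^+ (q - p) - X1 * X4 + X2 * X3.

Definition wZ (p q : nat) (mo : 'X_{1..5}) : int :=
  (mo (inord 0))%:Z - (p * (mo (inord 1) + mo (inord 2)))%:Z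
  + (q * (mo (inord 3) + mo (inord 4)))%:Z.

Definition wM (mo : 'X_{1..5}) : int :=
  (mo (inord 3) + mo (inord 4))%:Z - (mo (inord 1) + mo (inord 2))%:Z.

Definition homdeg (p q m : nat) (a b : int) (P : R5) : Prop :=
  forall mo, mo \in msupp P ->
    wZ p q mo = a /\ (wM mo = b %[mod m%:Z])%Z.

Definition in_ideal (p q : nat) (P : R5) : Prop :=
  exists h : R5, P = h * frel p q.

(* Since f is homogeneous, S = R5/(f) is Z x Z/mZ-graded and its
   homogeneous component S_(a,b) is the image of the homogeneous component
   R5_(a,b).  We describe S_(a,b) through representatives: a polynomial P
   represents an element of S_(a,b) iff P is congruent mod (f) to a
   homogeneous polynomial of degree (a,b). *)
Definition inS (p q m : nat) (a b : int) (P : R5) : Prop :=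
  exists Q : R5, homdeg p q m a b Q /\ in_ideal p q (P - Q).

Definition in_SG_span (p q m : nat) (Y1 Y2 P : R5) : Prop :=
  exists g1 g2 : R5, inS p q m 0 0 g1 /\ inS p q m 0 0 g2 /\
    in_ideal p q (P - (g1 * Y1 + g2 * Y2)).

From Pilot Require Import Defs.
From HB Require Import structures.
From mathcomp Require Import all_boot all_order all_algebra all_field.
From mathcomp Require Import mpoly.
From mathcomp Require Import zify ring.
Import GRing.Theory Num.Theory.
Local Open Scope ring_scope.

(* Every element of S_(a,b) is represented by a homogeneous polynomial, i.e.
   by a sum of monomials of degree (a,b), and for each such monomial we write
   down explicit coefficients of degree (0,0).  A monomial of degree (-p,-1)
   must contain X_1 or X_2, because X_0, X_3, X_4 have nonnegative Z-weight,
   and dividing it out leaves degree (0,0).  A monomial of degree (q,1)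
   without X_3, X_4 is X_0^a X_1^b1 X_2^b2 with a = q + p(b1+b2) >= q - p, and
   the relation X_0^(q-p) = X_1 X_4 - X_2 X_3 in S puts it into
   S^G X_3 + S^G X_4.  The reverse inclusions hold since X_1, X_2 have degree
   (-p,-1) and X_3, X_4 degree (q,1). *)

Lemma inord5_eq (i j : nat) : (i < 5)%N -> (j < 5)%N ->
  ((inord i : 'I_5) == inord j) = (i == j).
Proof. by move=> hi hj; rewrite -val_eqE /= !inordK. Qed.

Lemma mnm_splitU n (mo : 'X_{1..n}) i k : (k <= mo i)%N ->
  exists mo', mo = (mo' + U_(i) *+ k)%MM.
Proof.
move=> le_k; exists (mo - U_(i) *+ k)%MM; rewrite submK //.
apply/mnm_lepP => j; rewrite mulmnE mnm1E.
by case: eqP => [<-|]; rewrite ?mul1n.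
Qed.

Section Weights.
Variables p q : nat.

Lemma wZD m1 m2 : wZ p q (m1 + m2)%MM = wZ p q m1 + wZ p q m2.
Proof. rewrite /wZ !mnmDE; lia. Qed.

Lemma wMD m1 m2 : wM (m1 + m2)%MM = wM m1 + wM m2.
Proof. rewrite /wM !mnmDE; lia. Qed.

Lemma wZ_U k : (k < 5)%N -> wZ p q U_(inord k) =
  if k == 0%N then 1 else if (k == 1%N) || (k == 2%N) then - p%:Z else q%:Z.
Proof.
move=> lt_k5; rewrite /wZ !mnm1E !inord5_eq //.
by case: k lt_k5 => [|[|[|[|[|]]]]] //= _; lia.
Qed.

Lemma wM_U k : (k < 5)%N -> wM U_(inord k) =
  if k == 0%N then 0 else if (k == 1%N) || (k == 2%N) then -1 else 1.
Proof.
move=> lt_k5; rewrite /wM !mnm1E !inord5_eq //.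
by case: k lt_k5 => [|[|[|[|[|]]]]] //= _; lia.
Qed.

Lemma wZ_U0n k : wZ p q (U_(inord 0) *+ k)%MM = k%:Z.
Proof. rewrite /wZ !mulmnE !mnm1E !inord5_eq //=; lia. Qed.

Lemma wM_U0n k : wM (U_(inord 0) *+ k)%MM = 0.
Proof. rewrite /wM !mulmnE !mnm1E !inord5_eq //=; lia. Qed.

End Weights.

Section Grading.
Variables p q m : nat.

Lemma homdeg0 a b : homdeg p q m a b 0.
Proof. by move=> mo; rewrite msupp0. Qed.

Lemma homdegD a b P Q : homdeg p q m a b P -> homdeg p q m a b Q ->
  homdeg p q m a b (P + Q).
Proof. by move=> hP hQ mo /msuppD_le; rewrite mem_cat => /orP[/hP|/hQ]. Qed.

Lemma homdegZ a b c P : homdeg p q m a b P -> homdeg p q m a b (c *: P).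
Proof. by move=> hP mo /msuppZ_le /hP. Qed.

Lemma homdegX a b mo : wZ p q mo = a -> (wM mo = b %[mod m%:Z])%Z ->
  homdeg p q m a b 'X_[mo].
Proof. by move=> hZ hM mo'; rewrite msuppX mem_seq1 => /eqP ->. Qed.

Lemma homdegMX a b e P : homdeg p q m a b P ->
  homdeg p q m (a + wZ p q e) (b + wM e) (P * 'X_[e]).
Proof.
move=> hP mo; rewrite (perm_mem (msuppMX _ _)) => /mapP [mo' /hP [hZ hM] ->].
rewrite wZD wMD hZ addrC; split=> //.
by apply/eqP; rewrite [wM e + _]addrC eqz_modDr; apply/eqP.
Qed.

Lemma in_ideal0 : in_ideal p q 0.
Proof. by exists 0; rewrite mul0r. Qed.

Lemma in_idealD P Q : in_ideal p q P -> in_ideal p q Q -> in_ideal p q (P + Q).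
Proof. by move=> [h ->] [h' ->]; exists (h + h'); rewrite mulrDl. Qed.

Lemma in_idealMl R P : in_ideal p q P -> in_ideal p q (R * P).
Proof. by move=> [h ->]; exists (R * h); rewrite mulrA. Qed.

Definition hom_span (Y1 Y2 P : R5) := exists g1 g2 : R5,
  [/\ homdeg p q m 0 0 g1, homdeg p q m 0 0 g2 &
      in_ideal p q (P - (g1 * Y1 + g2 * Y2))].

Lemma hom_spanC Y1 Y2 P : hom_span Y1 Y2 P <-> hom_span Y2 Y1 P.
Proof.
suff sym Z1 Z2 : hom_span Z1 Z2 P -> hom_span Z2 Z1 P by split; apply: sym.
move=> [g1 [g2 [h1 h2 hP]]]; exists g2, g1.
by split; rewrite // [g2 * _ + _]addrC.
Qed.

Lemma hom_span_ideal Y1 Y2 P : in_ideal p q P -> hom_span Y1 Y2 P.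
Proof.
move=> hP; exists 0, 0.
by split; rewrite ?mul0r ?addr0 ?subr0 //; apply: homdeg0.
Qed.

Lemma hom_spanD Y1 Y2 P Q :
  hom_span Y1 Y2 P -> hom_span Y1 Y2 Q -> hom_span Y1 Y2 (P + Q).
Proof.
move=> [g1 [g2 [h1 h2 hP]]] [g1' [g2' [h1' h2' hQ]]].
exists (g1 + g1'), (g2 + g2'); split; try exact: homdegD.
have -> : P + Q - ((g1 + g1') * Y1 + (g2 + g2') * Y2) =
  (P - (g1 * Y1 + g2 * Y2)) + (Q - (g1' * Y1 + g2' * Y2)) by ring.
exact: in_idealD.
Qed.

Lemma in_SG_span_hom_span Y1 Y2 P :
  hom_span Y1 Y2 P -> in_SG_span p q m Y1 Y2 P.
Proof.
have inS_hom g : homdeg p q m 0 0 g -> inS p q m 0 0 g.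
  by move=> hg; exists g; split; rewrite // subrr; apply: in_ideal0.
move=> [g1 [g2 [h1 h2 hP]]]; exists g1, g2.
by split; [|split]; try exact: inS_hom.
Qed.

Lemma hom_span_inS Y1 Y2 a b :
  (forall mo c, wZ p q mo = a -> (wM mo = b %[mod m%:Z])%Z ->
     hom_span Y1 Y2 (c *: 'X_[mo])) ->
  forall P, inS p q m a b P -> hom_span Y1 Y2 P.
Proof.
move=> hmono P [Q [hQ hPQ]]; rewrite -(subrK Q P) addrC.
apply: hom_spanD; last exact: hom_span_ideal.
rewrite (mpolyE Q) big_seq; apply: (big_ind (hom_span Y1 Y2)).
- by apply: hom_span_ideal; apply: in_ideal0.
- exact: hom_spanD.
by move=> mo /hQ [hZ hM]; apply: hmono.
Qed.

Lemma inS_in_SG_span (i j : 'I_5) a b P :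
  wZ p q U_(i) = a -> wM U_(i) = b -> wZ p q U_(j) = a -> wM U_(j) = b ->
  in_SG_span p q m 'X_i 'X_j P -> inS p q m a b P.
Proof.
move=> hZi hMi hZj hMj [g1 [g2 [[Q1 [hQ1 hg1]] [[Q2 [hQ2 hg2]] hP]]]].
exists (Q1 * 'X_i + Q2 * 'X_j); split.
  apply: homdegD.
    by move/(@homdegMX _ _ U_(i)%MM): hQ1; rewrite hZi hMi !add0r.
  by move/(@homdegMX _ _ U_(j)%MM): hQ2; rewrite hZj hMj !add0r.
have -> : P - (Q1 * 'X_i + Q2 * 'X_j) = (P - (g1 * 'X_i + g2 * 'X_j))
  + ('X_i * (g1 - Q1) + 'X_j * (g2 - Q2)) by ring.
by apply: in_idealD => //; apply: in_idealD; apply: in_idealMl.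
Qed.

Lemma hom_spanX (i : 'I_5) Y mo c :
  wZ p q (mo + U_(i)) = wZ p q U_(i) ->
  (wM (mo + U_(i)) = wM U_(i) %[mod m%:Z])%Z ->
  hom_span 'X_i Y (c *: 'X_[mo + U_(i)]).
Proof.
rewrite wZD wMD -[X in (_ = X %[mod _])%Z]add0r => hZ.
move=> /eqP; rewrite eqz_modDr => /eqP hM.
exists (c *: 'X_[mo]), 0; split.
- by apply/homdegZ/homdegX => //; lia.
- exact: homdeg0.
- rewrite mpolyXD -!mul_mpolyC.
  have -> : c%:MP * ('X_[mo] * 'X_i) - (c%:MP * 'X_[mo] * 'X_i + 0 * Y) = 0.
    by ring.
  exact: in_ideal0.
Qed.

End Grading.

Section Generators.
Variables p q m : nat.

Lemma hom_span_X12 : (0 < p)%N -> forall mo c,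
  wZ p q mo = - p%:Z -> (wM mo = -1 %[mod m%:Z])%Z ->
  hom_span p q m X1 X2 (c *: 'X_[mo]).
Proof.
move=> p_gt0 mo c hZ hM.
case: (posnP (mo (inord 1))) => [mo1 | /(@mnm_splitU _ _ _ 1) [mo' Emo]];
  last first.
  by rewrite Emo; apply: hom_spanX; rewrite -Emo ?wZ_U ?wM_U.
have /(@mnm_splitU _ _ _ 1) [mo' Emo] : (0 < mo (inord 2))%N.
  by move: hZ; rewrite /wZ mo1; nia.
by rewrite Emo hom_spanC; apply: hom_spanX; rewrite -Emo ?wZ_U ?wM_U.
Qed.

Lemma hom_span_X34 : (p <= q)%N -> forall mo c,
  wZ p q mo = q%:Z -> (wM mo = 1 %[mod m%:Z])%Z ->
  hom_span p q m X3 X4 (c *: 'X_[mo]).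
Proof.
move=> le_pq mo c hZ hM.
case: (posnP (mo (inord 3))) => [mo3 | /(@mnm_splitU _ _ _ 1) [mo' Emo]];
  last first.
  by rewrite Emo; apply: hom_spanX; rewrite -Emo ?wZ_U ?wM_U.
case: (posnP (mo (inord 4))) => [mo4 | /(@mnm_splitU _ _ _ 1) [mo' Emo]];
  last first.
  by rewrite Emo hom_spanC; apply: hom_spanX; rewrite -Emo ?wZ_U ?wM_U.
have /(@mnm_splitU _ _ _ (q - p)) [mo' Emo] : (q - p <= mo (inord 0))%N.
  by move: hZ; rewrite /wZ mo3 mo4; nia.
move: hZ hM; rewrite Emo wZD wMD wZ_U0n wM_U0n addr0 => hZ hM.
have hdeg d (i : 'I_5) : wZ p q U_(i) = - p%:Z -> wM U_(i) = -1 ->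
    homdeg p q m 0 0 (d *: 'X_[mo' + U_(i)]).
  move=> hZi hMi; apply/homdegZ/homdegX; rewrite ?wZD ?wMD ?hZi ?hMi.
    by move: hZ; lia.
  by apply/eqP; rewrite -(eqz_modDr 1) addrNK add0r; apply/eqP.
exists ((- c) *: 'X_[mo' + U_(inord 2)]), (c *: 'X_[mo' + U_(inord 1)]).
split; try by apply: hdeg; rewrite ?wZ_U ?wM_U.
exists (c *: 'X_[mo']).
rewrite !mpolyXD -mpolyXn -!mul_mpolyC raddfN.
by rewrite /Defs.frel /X0 /X1 /X2 /X3 /X4; ring.
Qed.

End Generators.

Theorem lemma4p4 (p q m : nat) :
  (0 < p)%N -> (0 < q)%N -> coprime p q -> (p <= q)%N -> (0 < m)%N ->
  (forall P : R5, inS p q m (- p%:Z) (-1) P <-> in_SG_span p q m X1 X2 P) /\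
  (forall P : R5, inS p q m q%:Z 1 P <-> in_SG_span p q m X3 X4 P).
Proof.
move=> p_gt0 _ _ le_pq _; split=> P; split.
- move=> hP; apply/in_SG_span_hom_span; apply: hom_span_inS hP.
  exact: hom_span_X12.
- by apply: inS_in_SG_span; rewrite ?wZ_U ?wM_U.
- move=> hP; apply/in_SG_span_hom_span; apply: hom_span_inS hP.
  exact: hom_span_X34.
- by apply: inS_in_SG_span; rewrite ?wZ_U ?wM_U.
Qed.
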